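(* Let $n$ be a positive integer and $k$ an integer with $0\le k\le n-1$. Then $$\binom{2k}{k}\sum_{i=0}^{k}\left(\binom{n}{k+i+1}+4\binom{n}{k+i+2}\right)\binom{k+i}{i}\binom{k}{i}\equiv 0\pmod n.$$
   Context: Binomial coefficients $\binom{a}{b}$ with $b>a\ge 0$ are zero. *)

From mathcomp Require Import all_boot.

(** Write [a j = 'C(n, k + j + 1)] and [x i = 'C(k + i, i) * 'C(k, i)].
    Regrouping the sum along the [a j] gives
    [a 0 * x 0 + \sum_(i <= k) a (i + 1) * (x (i + 1) + 4 * x i)].  Since
    [(p + 1) * 'C(n, p + 1) = n * 'C(n - 1, p)], the number [n] divides
    [d * 'C(n, p + 1)] whenever [p + 1] divides [d].  So it suffices that
    [k + 1] divides ['C(2k, k)] (Catalan numbers are integers) and that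
    [k + i + 2] divides ['C(2k, k) * (x (i + 1) + 4 * x i)].  For the latter,
    ['C(2k, k) * x i = 'C(2k, k + i) * 'C(k + i, i) ^ 2], and an explicit
    binomial identity exhibits the quotient. *)

From mathcomp Require Import all_boot all_algebra.
From mathcomp Require Import ring zify.

Set Implicit Arguments.
Unset Strict Implicit.
Unset Printing Implicit Defensive.

Import GRing.Theory Num.Theory.

Lemma sum_regroup_shift (c : nat) (a x : nat -> nat) (m : nat) :
  \sum_(0 <= i < m) (a i + c * a i.+1) * x i + a m * x m =
  a 0 * x 0 + \sum_(0 <= i < m) a i.+1 * (x i.+1 + c * x i).
Proof.
elim: m => [|m IHm]; first by rewrite !big_geq // add0n addn0.
by rewrite !big_nat_recr //= addnA -IHm; ring.
Qed.

Lemma dvdn_mul_bin (n p d : nat) : p.+1 %| d -> n %| d * 'C(n, p.+1).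
Proof. by case/dvdnP=> q ->; rewrite -mulnA -mul_bin_diag mulnCA dvdn_mulr. Qed.

Lemma dvdn_central_bin (k : nat) : k.+1 %| 'C(k.*2, k).
Proof.
have catalan : k.+1 * 'C(k.*2, k.+1) = k * 'C(k.*2, k).
  by rewrite mul_bin_left (_ : k.*2 - k = k) //; lia.
by rewrite -(Gauss_dvdr _ (coprimeSn k)) -catalan dvdn_mulr.
Qed.

Lemma bin_mul_bin (n m j : nat) : j <= m -> m <= n ->
  'C(n, m) * 'C(m, j) = 'C(n, j) * 'C(n - j, m - j).
Proof.
move=> le_jm le_mn; have le_jn := leq_trans le_jm le_mn.
apply/eqP; rewrite -(@eqn_pmul2r (j`! * (m - j)`! * (n - m)`!)) ?muln_gt0 ?fact_gt0 //.
have -> : 'C(n, m) * 'C(m, j) * (j`! * (m - j)`! * (n - m)`!)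
        = 'C(m, j) * (j`! * (m - j)`!) * 'C(n, m) * (n - m)`! by ring.
have -> : 'C(n, j) * 'C(n - j, m - j) * (j`! * (m - j)`! * (n - m)`!)
        = 'C(n - j, m - j) * ((m - j)`! * (n - j - (m - j))`!) * 'C(n, j) * j`!.
  by rewrite (_ : n - j - (m - j) = n - m); [ring | lia].
rewrite !bin_fact ?leq_sub2r //; apply/eqP.
by transitivity n`!; [rewrite -(bin_fact le_mn) | rewrite -(bin_fact le_jn)]; ring.
Qed.

(* Up to sign, the coefficients of the shifted Legendre polynomial [P_k(2x - 1)]. *)
Definition legendre_coef (k i : nat) : nat := 'C(k + i, i) * 'C(k, i).

Lemma central_bin_mul_legendre_coef (k i : nat) :
  'C(k.*2, k) * legendre_coef k i = 'C(k.*2, k + i) * 'C(k + i, i) ^ 2.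
Proof.
rewrite /legendre_coef; have [le_ik | lt_ki] := leqP i k; last first.
  by rewrite (bin_small lt_ki) (@bin_small k.*2 (k + i)) ?muln0 //; lia.
have le_ki2k : k + i <= k.*2 by lia.
have := bin_mul_bin (leq_addr i k) le_ki2k.
have symm : 'C(k + i, k) = 'C(k + i, i) by rewrite -(bin_sub (leq_addl k i)) addnK.
rewrite symm -addnn addKn [k + i - k]addKn.
by move=> revision; rewrite mulnCA -revision; ring.
Qed.

Lemma natr_eq_div (R : numFieldType) (d x y : nat) :
  d.+1 * x = y -> (x%:R = y%:R / d.+1%:R :> R)%R.
Proof. by move<-; rewrite natrM [(_ * x%:R)%R]mulrC mulfK // pnatr_eq0. Qed.

(* With [m = k + i + 1] the bracket on the right is
   [('C(2k, m) - 'C(2k, m + 1)) * 'C(m, i + 1) ^ 2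
      + 2 * 'C(2k, m - 1) * 'C(m - 1, i) * ('C(m - 1, i) - 'C(m - 1, i + 1))],
   rearranged so that no subtraction occurs. *)
Lemma legendre_step_identity (k i : nat) : i < k ->
  'C(k.*2, k + i.+1) * 'C(k + i.+1, i.+1) ^ 2 + 4 * ('C(k.*2, k + i) * 'C(k + i, i) ^ 2)
    + (k + i.+2) * (6 * 'C(k.*2, k + i) * 'C(k + i.+1, i.+1) * 'C(k + i, i.+1)
                    + 'C(k.*2, k + i.+2) * 'C(k + i.+1, i.+1) ^ 2)
  = (k + i.+2) * (('C(k.*2, k + i.+1) + 2 * 'C(k.*2, k + i)) * 'C(k + i.+1, i.+1) ^ 2
                  + 4 * 'C(k.*2, k + i) * 'C(k + i, i.+1) ^ 2).
Proof.
move=> lt_ik; rewrite !addnS.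
have /(natr_eq_div rat) eA0 : (k + i).+1 * 'C(k.*2, (k + i).+1) = (k - i) * 'C(k.*2, k + i).
  by rewrite mul_bin_left; congr (_ * _); lia.
have /(natr_eq_div rat) eAm : (k + i).+2 * 'C(k.*2, (k + i).+2) = (k - i.+1) * 'C(k.*2, (k + i).+1).
  by rewrite mul_bin_left; congr (_ * _); lia.
have /(natr_eq_div rat) eX : i.+1 * 'C((k + i).+1, i.+1) = (k + i).+1 * 'C(k + i, i).
  by rewrite -mul_bin_diag.
have /(natr_eq_div rat) eY : i.+1 * 'C(k + i, i.+1) = k * 'C(k + i, i).
  by rewrite mul_bin_left addnK.
(* The binomials are abstracted, since [natrD] would unfold them through [binS]. *)
move: eA0 eAm eX eY.
set A0 := 'C(k.*2, (k + i).+1); set A1 := 'C(k.*2, k + i); set Am := 'C(k.*2, (k + i).+2).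
set X := 'C((k + i).+1, i.+1); set Y := 'C(k + i, i.+1); set Z := 'C(k + i, i).
move=> eA0 eAm eX eY; clearbody A0 A1 Am X Y Z.
apply/eqP; rewrite -(eqr_nat rat) !(natrD, natrM, natrX) eAm natrM eA0 eX eY.
rewrite !natrM !natrB ?(ltnW lt_ik) // -!natr1 !natrD.
by apply/eqP; field; rewrite -!natrD !natr1 !pnatr_eq0.
Qed.

Lemma dvdn_central_bin_legendre_step (k i : nat) :
  k + i.+2 %| 'C(k.*2, k) * (legendre_coef k i.+1 + 4 * legendre_coef k i).
Proof.
have [lt_ik | le_ki] := ltnP i k.
  rewrite mulnDr mulnCA !central_bin_mul_legendre_coef.
  have := congr1 (dvdn (k + i.+2)) (legendre_step_identity lt_ik).
  by rewrite dvdn_addl ?dvdn_mulr // => ->; rewrite dvdn_mulr.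
rewrite /legendre_coef (@bin_small k i.+1) ?ltnS // muln0 add0n.
move: le_ki; rewrite leq_eqVlt => /orP[/eqP <- | lt_ki]; last first.
  by rewrite (bin_small lt_ki) !muln0.
rewrite binn muln1 addnn (_ : k + k.+2 = k.+1 * 2); last by lia.
exact: dvdn_mul (dvdn_central_bin k) (dvdn_mulr _ (isT : 2 %| 4)).
Qed.

Theorem mainTheorem9 (n k : nat) (hn : 0 < n) (hk : k <= n - 1) :
  n %| 'C(k.*2, k) *
        \sum_(0 <= i < k.+1)
          ('C(n, k + i + 1) + 4 * 'C(n, k + i + 2)) * 'C(k + i, i) * 'C(k, i).
Proof.
pose a j := 'C(n, (k + j).+1).
have sumE : \sum_(0 <= i < k.+1)
    ('C(n, k + i + 1) + 4 * 'C(n, k + i + 2)) * 'C(k + i, i) * 'C(k, i)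
  = a 0 * legendre_coef k 0
    + \sum_(0 <= i < k.+1) a i.+1 * (legendre_coef k i.+1 + 4 * legendre_coef k i).
  rewrite -sum_regroup_shift {2}/legendre_coef (bin_small (ltnSn k)) !muln0 addn0.
  by apply: eq_bigr => i _; rewrite /a /legendre_coef addn1 addn2 addnS mulnA.
rewrite sumE mulnDr big_distrr /= dvdn_add //.
  by rewrite /a /legendre_coef !bin0 !muln1 addn0 dvdn_mul_bin ?dvdn_central_bin.
apply: dvdn_sum => i _; rewrite /a mulnCA mulnC dvdn_mul_bin //.
by rewrite -addnS dvdn_central_bin_legendre_step.
Qed.
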